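(* Let $F=\mathbb{F}_{q^u}$ ($u\in\{1,2\}$), let $V$ be a finite-dimensional vector space over $F$, let $\beta$ be a non-degenerate alternating, symmetric or hermitian form on $V$, and let $X\in\mathcal{C}(\beta)$ have minimal polynomial $f_1^{e_1}\cdots f_h^{e_h}$, where $f_1,\ldots,f_h\in\Phi$ are distinct. Let $V_i=\ker(f_i(X)^{e_i})$. Let $\gamma$ be a form on $V$ of the form $\gamma(v,w)=\beta(vg,wg)$ for some $g\in{\rm GL}(V)$, such that $\gamma(vX,wX)=\gamma(v,w)$ for all $v,w$. If $f_i\neq f_j^*$, then $\gamma(v,w)=0$ for all $v\in V_i$, $w\in V_j$ (equivalently, the $(i,j)$ block of the matrix of $\gamma$ with respect to a basis that is a union of bases of the $V_i$ is zero).
   Context: $\lambda\mapsto\bar\lambda=\lambda^q$ is the automorphism of $F$ of order $u$; forms are left-linear with $\beta(w,v)=\overline{\beta(v,w)}$ (alternating/symmetric for $u=1$, hermitian for $u=2$); $\mathcal{C}(\beta)=\{g\in{\rm GL}(V):\beta(vg,wg)=\beta(v,w)\}$. For monic $f=t^d+\cdots+a_0$ with $a_0\ne0$, $f^*(t)=\bar a_0^{-1}t^d\bar f(t^{-1})$. $\Phi$ is the union of: monic irreducible self-dual ($f=f^*$) polynomials, and products $gg^*$ with $g$ monic irreducible and $g\ne g^*$. *)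

From mathcomp Require Import all_boot all_order all_algebra.
Set Implicit Arguments. Unset Strict Implicit. Unset Printing Implicit Defensive.
Import GRing.Theory.
Local Open Scope ring_scope.

(* F = F_{q^u}; the field automorphism lambda |-> bar lambda = lambda^q. *)
Definition fbar (F : finFieldType) (q : nat) (x : F) : F := x ^+ q.

(* f^*(t) = bar(a_0)^{-1} t^d bar f(t^{-1}), d = deg f:
   the coefficient of t^i is bar(a_0)^{-1} bar(a_{d-i}). *)
Definition pstar (F : finFieldType) (q : nat) (f : {poly F}) : {poly F} :=
  (fbar q (f`_0))^-1 *: \poly_(i < size f) fbar q (f`_((size f).-1 - i)).

(* Phi: monic irreducible self-dual polynomials, and products g g^* with g
   monic irreducible, g <> g^*.  (f^* is only defined when f(0) <> 0.) *)
Definition inPhi (F : finFieldType) (q : nat) (f : {poly F}) : Prop :=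
  (f \is monic /\ irreducible_poly f /\ f`_0 != 0 /\ f = pstar q f) \/
  (exists g : {poly F}, [/\ g \is monic, irreducible_poly g, g`_0 != 0,
      g <> pstar q g & f = g * pstar q g]).

(* Forms on V = 'rV[F]_n (vectors are rows, matrices act on the right):
   left-linear, and semilinear in the second argument w.r.t. the bar map. *)
Definition sesqui_form (F : finFieldType) (q n : nat)
  (b : 'rV[F]_n -> 'rV[F]_n -> F) : Prop :=
  (forall a v v' w, b (a *: v + v') w = a * b v w + b v' w) /\
  (forall a v w w', b v (a *: w + w') = fbar q a * b v w + b v w').

Definition is_form (F : finFieldType) (q u n : nat)
  (b : 'rV[F]_n -> 'rV[F]_n -> F) : Prop :=
  sesqui_form q b /\
  [\/ u = 1%N /\ (forall v, b v v = 0),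
      u = 1%N /\ (forall v w, b w v = b v w)
    | u = 2%N /\ (forall v w, b w v = fbar q (b v w))].

Definition nondeg_form (F : finFieldType) (n : nat)
  (b : 'rV[F]_n -> 'rV[F]_n -> F) : Prop :=
  forall v, (forall w, b v w = 0) -> v = 0.

Definition in_isom_group (F : finFieldType) (n : nat)
  (b : 'rV[F]_n -> 'rV[F]_n -> F) (g : 'M[F]_n) : Prop :=
  g \in unitmx /\ forall v w, b (v *m g) (w *m g) = b v w.

(* Write bar x = x^q; on F_{q^u} it is an involutive field automorphism (a power
   of the Frobenius map).  As X is a gamma-isometry, gamma(v X^d, w X^a) equals
   gamma(v X^(d-a), w), so gamma(v X^d, w p(X)) = gamma(v p~(X), w) where
   p~(t) = t^d bar(p)(1/t) is a scalar multiple of p^* when d = deg p.  Hence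
   ker p(X) is gamma-orthogonal to the image of p^*(X).  Elements of Phi are
   self-dual, so for B = f_j^(e_j) the kernel of B(X) is orthogonal to the image
   of B(X).  An element of Phi is determined by any of its monic irreducible
   factors r (it is r if r = r^*, and r r^* otherwise), so distinct elements of
   Phi are coprime.  As f_j = f_j^*, the hypothesis says f_i <> f_j, and by
   Bezout the kernel of f_i^(e_i)(X) lies in the image of B(X). *)

From mathcomp Require Import all_boot all_order all_algebra finfield zify.
Set Implicit Arguments. Unset Strict Implicit. Unset Printing Implicit Defensive.
Import GRing.Theory.
Local Open Scope ring_scope.

Lemma coef0_neq0_dvdp (F : fieldType) (r p : {poly F}) :
  r %| p -> p`_0 != 0 -> r`_0 != 0.
Proof. by case/dvdpP=> s ->; rewrite coef0M mulf_eq0 negb_or => /andP[]. Qed.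

Lemma irredp_dvdpM (F : fieldType) (r a b : {poly F}) :
  irreducible_poly r -> r %| a * b -> r %| a \/ r %| b.
Proof.
move=> irr_r r_ab; have [|r_a] := boolP (r %| a); first by left.
by right; rewrite -(Gauss_dvdpr _ (_ : coprimep r a)) // irreducible_poly_coprime.
Qed.

Lemma monic_irredp_dvdp_eq (F : fieldType) (r g : {poly F}) :
  r \is monic -> g \is monic -> irreducible_poly r -> irreducible_poly g ->
  r %| g -> r = g.
Proof.
move=> mon_r mon_g [/gtn_eqF size_r _] irr_g r_g.
by apply/eqP; rewrite -eqp_monic //; apply: irr_g; rewrite ?size_r.
Qed.

Lemma poly_expand (R : nzRingType) d (p : {poly R}) : (size p <= d.+1)%N ->
  p = \sum_(a < d.+1) p`_a *: 'X^a.
Proof.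
move=> size_p; rewrite -poly_def; apply/polyP=> i; rewrite coef_poly.
by case: ltnP => // le_di; rewrite nth_default // (leq_trans size_p).
Qed.

Lemma pchar_nat_card (F : finFieldType) : [pchar F].-nat #|F|.
Proof.
have [p _ pF] := finPcharP F.
rewrite (eq_pnat _ (pcharf_eq pF)) [#|F|](card_pprimeChar pF).
by rewrite pnatX pnat_id ?(pcharf_prime pF) ?orbT.
Qed.

Lemma fbarD_of_card (F : finFieldType) (q u : nat) : (0 < u)%N -> #|F| = (q ^ u)%N ->
  {morph fbar q : x y / x + y :> F}.
Proof.
move=> u_gt0 cardF x y; apply: exprDn_pchar.
by apply: pnat_dvd (pchar_nat_card F); rewrite cardF dvdn_exp.
Qed.

Lemma fbarK_of_card (F : finFieldType) (q u : nat) : u = 1%N \/ u = 2%N ->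
  #|F| = (q ^ u)%N -> involutive (@fbar F q).
Proof.
move=> [] -> cardF x; rewrite /fbar -exprM.
  by rewrite expn1 in cardF; rewrite exprM -cardF !expf_card.
by rewrite mulnn -cardF expf_card.
Qed.

Section PolynomialDuality.
Variables (F : finFieldType) (q : nat).
Local Notation bar := (@fbar F q).
Hypotheses (fbarD : {morph bar : x y / x + y}) (fbarK : involutive bar).
Implicit Types (x y : F) (p r s f g : {poly F}).

Lemma fbar0 : bar 0 = 0.
Proof. by apply: (@addrI _ (bar 0)); rewrite -fbarD !addr0. Qed.

Lemma fbar1 : bar 1 = 1.
Proof. exact: expr1n. Qed.

Lemma fbarM x y : bar (x * y) = bar x * bar y.
Proof. exact: exprMn. Qed.

Lemma fbarV x : bar x^-1 = (bar x)^-1.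
Proof. exact: exprVn. Qed.

Lemma fbar_eq0 x : (bar x == 0) = (x == 0).
Proof. by apply/eqP/eqP => [bx0 | ->]; rewrite ?fbar0 // -[x]fbarK bx0 fbar0. Qed.

(* [conj_rev d p] is t^d bar(p)(1/t). *)
Definition conj_rev (d : nat) (p : {poly F}) : {poly F} :=
  \poly_(i < d.+1) bar p`_(d - i).

Lemma coef_conj_rev d p i :
  (conj_rev d p)`_i = if (i <= d)%N then bar p`_(d - i) else 0.
Proof. by rewrite coef_poly. Qed.

Lemma conj_revD d : {morph conj_rev d : p p' / p + p'}.
Proof.
move=> p p'; apply/polyP=> i; rewrite coefD !coef_conj_rev.
by case: ifP; rewrite ?addr0 // coefD fbarD.
Qed.

Lemma conj_rev0 d : conj_rev d 0 = 0.
Proof. by apply/polyP=> i; rewrite coef_conj_rev coef0 fbar0 coef0; case: ifP. Qed.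

Lemma conj_revZ d a p : conj_rev d (a *: p) = bar a *: conj_rev d p.
Proof.
apply/polyP=> i; rewrite coefZ !coef_conj_rev.
by case: ifP; rewrite ?mulr0 // coefZ fbarM.
Qed.

Lemma conj_rev_sum d I (r : seq I) (P : pred I) (G : I -> {poly F}) :
  conj_rev d (\sum_(i <- r | P i) G i) = \sum_(i <- r | P i) conj_rev d (G i).
Proof. exact: (big_morph _ (conj_revD d) (conj_rev0 d)). Qed.

Lemma conj_revXn d a : (a <= d)%N -> conj_rev d 'X^a = 'X^(d - a).
Proof.
move=> le_ad; apply/polyP=> i; rewrite coef_conj_rev !coefXn.
case: leqP => [le_id | lt_di]; last by have -> : (i == d - a)%N = false by lia.
have -> : (d - i == a)%N = (i == d - a)%N by apply/eqP/eqP; lia.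
by case: eqP; rewrite ?fbar1 ?fbar0.
Qed.

Lemma conj_rev_expand d (p : {poly F}) : (size p <= d.+1)%N ->
  conj_rev d p = \sum_(a < d.+1) bar p`_a *: 'X^(d - a).
Proof.
move=> size_p; rewrite {1}(poly_expand size_p) conj_rev_sum.
by apply: eq_bigr => a _; rewrite conj_revZ conj_revXn // -ltnS.
Qed.

Lemma conj_revM d1 d2 (p p' : {poly F}) :
  (size p <= d1.+1)%N -> (size p' <= d2.+1)%N ->
  conj_rev (d1 + d2) (p * p') = conj_rev d1 p * conj_rev d2 p'.
Proof.
move=> size_p size_p'; rewrite (conj_rev_expand size_p) (conj_rev_expand size_p').
rewrite {1}(poly_expand size_p) {1}(poly_expand size_p') big_distrl conj_rev_sum /=.
rewrite big_distrl /=; apply: eq_bigr => a _.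
rewrite big_distrr conj_rev_sum big_distrr /=; apply: eq_bigr => b _.
have := ltn_ord a; have := ltn_ord b => lt_b lt_a.
rewrite -!scalerAl -!scalerAr !scalerA -!exprD conj_revZ fbarM conj_revXn; last by lia.
by congr (_ *: 'X^_); lia.
Qed.

Lemma conj_revK d (p : {poly F}) : (size p <= d.+1)%N ->
  conj_rev d (conj_rev d p) = p.
Proof.
move=> size_p; apply/polyP=> i; rewrite !coef_conj_rev; case: leqP => [le_id | lt_di].
  by rewrite leq_subr fbarK subKn.
by rewrite nth_default // (leq_trans size_p).
Qed.

Lemma size_conj_rev d (p : {poly F}) : p`_0 != 0 -> size (conj_rev d p) = d.+1.
Proof. by move=> p0; rewrite size_poly_eq // subnn fbar_eq0. Qed.

Lemma pstarE p : pstar q p = (bar p`_0)^-1 *: conj_rev (size p).-1 p.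
Proof.
have [-> | /polySpred size_p] := eqVneq p 0; last by rewrite /pstar /conj_rev -size_p.
by rewrite /pstar coef0 fbar0 invr0 !scale0r.
Qed.

Lemma size_pstar p : p`_0 != 0 -> size (pstar q p) = size p.
Proof.
move=> p0; have p_neq0 : p != 0 by apply: contraNneq p0 => ->; rewrite coef0.
by rewrite pstarE size_scale ?size_conj_rev -?polySpred ?invr_eq0 ?fbar_eq0.
Qed.

Lemma pstar_monic p : p`_0 != 0 -> pstar q p \is monic.
Proof.
move=> p0; rewrite monicE lead_coefE size_pstar // pstarE coefZ coef_conj_rev.
by rewrite leqnn subnn mulVf // fbar_eq0.
Qed.

Lemma pstar_coef0 p : p`_0 != 0 -> (pstar q p)`_0 != 0.
Proof.
move=> p0; have p_neq0 : p != 0 by apply: contraNneq p0 => ->; rewrite coef0.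
rewrite pstarE coefZ coef_conj_rev subn0 mulf_neq0 ?invr_eq0 ?fbar_eq0 //.
by rewrite -lead_coefE lead_coef_eq0.
Qed.

Lemma pstarK p : p \is monic -> p`_0 != 0 -> pstar q (pstar q p) = p.
Proof.
move=> mon_p p0; have p_neq0 : p != 0 by apply: contraNneq p0 => ->; rewrite coef0.
rewrite [pstar q (pstar q p)]pstarE size_pstar // [pstar q p]pstarE.
rewrite conj_revZ conj_revK -?polySpred // coefZ coef_conj_rev subn0 -lead_coefE.
by rewrite (monicP mon_p) fbar1 mulr1 scalerA fbarV fbarK mulVf ?scale1r ?invr_eq0.
Qed.

Lemma pstarM p p' : p`_0 != 0 -> p'`_0 != 0 ->
  pstar q (p * p') = pstar q p * pstar q p'.
Proof.
move=> p0 p'0; have p_neq0 : p != 0 by apply: contraNneq p0 => ->; rewrite coef0.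
have p'_neq0 : p' != 0 by apply: contraNneq p'0 => ->; rewrite coef0.
rewrite !pstarE -scalerAl -scalerAr scalerA coef0M fbarM invfM; congr (_ *: _).
rewrite -conj_revM -?polySpred // size_mul // (polySpred p_neq0) (polySpred p'_neq0).
by congr conj_rev; lia.
Qed.

Lemma pstar1 : pstar q 1 = 1 :> {poly F}.
Proof.
apply/polyP=> i; rewrite pstarE coefZ coef_conj_rev size_poly1 !coef1.
by case: i => [|i]; rewrite /= ?fbar1 ?invr1 ?mulr1 ?mulr0.
Qed.

Lemma pstarX p k : p`_0 != 0 -> pstar q (p ^+ k) = pstar q p ^+ k.
Proof.
move=> p0; elim: k => [|k IHk]; first by rewrite !expr0 pstar1.
have pk0 : (p ^+ k)`_0 != 0 by rewrite -horner_coef0 horner_exp expf_neq0 ?horner_coef0.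
by rewrite !exprS pstarM // IHk.
Qed.

Lemma pstar_dvdp r p : r %| p -> p`_0 != 0 -> pstar q r %| pstar q p.
Proof.
case/dvdpP=> s -> sr0; have s0 := coef0_neq0_dvdp (dvdp_mull s (dvdpp r)) sr0.
have r0 := coef0_neq0_dvdp (dvdp_mulr r (dvdpp s)) sr0.
by rewrite pstarM // dvdp_mull.
Qed.

Lemma pstar_irreducible g : g \is monic -> g`_0 != 0 ->
  irreducible_poly g -> irreducible_poly (pstar q g).
Proof.
move=> mon_g g0 [size_g irr_g]; split=> [|s size_s s_dvd]; first by rewrite size_pstar.
have s0 := coef0_neq0_dvdp s_dvd (pstar_coef0 g0).
have : pstar q s %= g.
  apply: irr_g; first by rewrite size_pstar.
  by rewrite -[X in _ %| X](pstarK mon_g g0) pstar_dvdp // pstar_coef0.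
move/eqp_size; rewrite size_pstar // -(size_pstar g0) => /eqP.
by rewrite dvdp_size_eqp.
Qed.

Lemma inPhi_selfdual f : inPhi q f -> [/\ f \is monic, f`_0 != 0 & pstar q f = f].
Proof.
case=> [[mon_f [_ [f0 /esym sd_f]]] | [g [mon_g _ g0 _ ->]]]; first by [].
have g'0 := pstar_coef0 g0.
split; first by rewrite monicMl // pstar_monic.
  by rewrite coef0M mulf_neq0.
by rewrite pstarM // pstarK // mulrC.
Qed.

Definition dual_hull r := if r == pstar q r then r else r * pstar q r.

Lemma inPhi_dual_hull f r : inPhi q f ->
  r \is monic -> irreducible_poly r -> r %| f -> f = dual_hull r.
Proof.
case=> [[mon_f [irr_f [_ sd_f]]] | [g [mon_g irr_g g0 sd_g ->]]] mon_r irr_r r_f.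
  by rewrite (monic_irredp_dvdp_eq mon_r mon_f irr_r irr_f r_f) /dual_hull -sd_f eqxx.
have [r_g | r_g'] := irredp_dvdpM irr_r r_f.
  rewrite (monic_irredp_dvdp_eq mon_r mon_g irr_r irr_g r_g) /dual_hull.
  by case: eqP.
have irr_g' := pstar_irreducible mon_g g0 irr_g.
rewrite (monic_irredp_dvdp_eq mon_r (pstar_monic g0) irr_r irr_g' r_g').
by rewrite /dual_hull pstarK //; case: eqP => [/esym // | _]; rewrite mulrC.
Qed.

Lemma inPhi_coprime f1 f2 : inPhi q f1 -> inPhi q f2 -> f1 <> f2 -> coprimep f1 f2.
Proof.
move=> Phi1 Phi2 neq_f12.
have coprime_factor r : r \is monic -> irreducible_poly r -> r %| f1 -> coprimep r f2.
  move=> mon_r irr_r r_f1; rewrite irreducible_poly_coprime //; apply/negP => r_f2.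
  apply: neq_f12; rewrite (inPhi_dual_hull Phi1 mon_r irr_r r_f1).
  by rewrite (inPhi_dual_hull Phi2 mon_r irr_r r_f2).
case: Phi1 coprime_factor => [[mon_f1 [irr_f1 _]] | [g [mon_g irr_g g0 _ ->]]] coprime_factor.
  exact: coprime_factor.
rewrite coprimepMl !coprime_factor ?pstar_monic //.
- exact: pstar_irreducible.
- exact: dvdp_mull.
- exact: dvdp_mulr.
Qed.

End PolynomialDuality.

Lemma sesqui_form_mulmx (F : finFieldType) (q n : nat)
    (beta gamma : 'rV[F]_n -> 'rV[F]_n -> F) (g : 'M[F]_n) :
  (forall v w, gamma v w = beta (v *m g) (w *m g)) ->
  sesqui_form q beta -> sesqui_form q gamma.
Proof.
move=> gammaE [DZl DZr].
by split=> a v v' w; rewrite !gammaE mulmxDl -scalemxAl ?DZl ?DZr.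
Qed.

Lemma coprimep_ker_horner_mx (F : fieldType) (n : nat) (X : 'M[F]_n.+1)
    (a b : {poly F}) (v : 'rV[F]_n.+1) :
  coprimep a b -> v *m horner_mx X a = 0 -> exists u, v = u *m horner_mx X b.
Proof.
case/Bezout_eq1_coprimepP=> [[u1 u2] /= bezout] va0; exists (v *m horner_mx X u2).
have := congr1 (fun p => v *m horner_mx X p) bezout.
rewrite /= [u1 * a]mulrC rmorph1 rmorphD !rmorphM /= mulmx1 mulmxDr -!mulmxE !mulmxA.
by rewrite va0 mul0mx add0r.
Qed.

Lemma horner_mx_expand (R : comNzRingType) (n d : nat) (X : 'M[R]_n.+1) (p : {poly R}) :
  (size p <= d.+1)%N ->
  horner_mx X p = \sum_(a < d.+1) p`_a *: X ^+ a.
Proof.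
move=> size_p; rewrite {1}(poly_expand size_p) linear_sum; apply: eq_bigr => a _.
by rewrite linearZ rmorphXn /= horner_mx_X.
Qed.

Section IsometryAdjoint.
Variables (F : finFieldType) (q n : nat).
Local Notation bar := (@fbar F q).
Hypothesis fbarD : {morph bar : x y / x + y}.
Variable gamma : 'rV[F]_n.+1 -> 'rV[F]_n.+1 -> F.
Hypothesis gamma_sesqui : sesqui_form q gamma.
Variable X : 'M[F]_n.+1.
Hypothesis isom_X : forall v w, gamma (v *m X) (w *m X) = gamma v w.
Implicit Types (a : F) (v w : 'rV[F]_n.+1) (p : {poly F}).

Lemma formDl v v' w : gamma (v + v') w = gamma v w + gamma v' w.
Proof. by rewrite -{1}[v]scale1r gamma_sesqui.1 mul1r. Qed.

Lemma formDr v w w' : gamma v (w + w') = gamma v w + gamma v w'.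
Proof. by rewrite -{1}[w]scale1r gamma_sesqui.2 fbar1 mul1r. Qed.

Lemma form0l w : gamma 0 w = 0.
Proof. by apply: (@addrI _ (gamma 0 w)); rewrite -formDl !addr0. Qed.

Lemma form0r v : gamma v 0 = 0.
Proof. by apply: (@addrI _ (gamma v 0)); rewrite -formDr !addr0. Qed.

Lemma formZl a v w : gamma (a *: v) w = a * gamma v w.
Proof. by rewrite -[a *: v]addr0 gamma_sesqui.1 form0l addr0. Qed.

Lemma formZr a v w : gamma v (a *: w) = bar a * gamma v w.
Proof. by rewrite -[a *: w]addr0 gamma_sesqui.2 form0r addr0. Qed.

Lemma form_suml I (r : seq I) (P : pred I) (vs : I -> 'rV[F]_n.+1) w :
  gamma (\sum_(i <- r | P i) vs i) w = \sum_(i <- r | P i) gamma (vs i) w.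
Proof. exact: (big_morph (gamma^~ w) (fun v v' => formDl v v' w) (form0l w)). Qed.

Lemma form_sumr I (r : seq I) (P : pred I) (ws : I -> 'rV[F]_n.+1) v :
  gamma v (\sum_(i <- r | P i) ws i) = \sum_(i <- r | P i) gamma v (ws i).
Proof. exact: (big_morph (gamma v) (formDr v) (form0r v)). Qed.

Lemma form_mulmx_exp k v w : gamma (v *m X ^+ k) (w *m X ^+ k) = gamma v w.
Proof.
elim: k => [|k IHk]; first by rewrite expr0 !mulmx1.
by rewrite exprSr -!mulmxE !mulmxA isom_X IHk.
Qed.

Lemma form_adjoint_conj_rev d p v w : (size p <= d.+1)%N ->
  gamma (v *m X ^+ d) (w *m horner_mx X p) =
  gamma (v *m horner_mx X (conj_rev q d p)) w.
Proof.
move=> size_p; rewrite (horner_mx_expand X size_p) (conj_rev_expand fbarD size_p).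
rewrite mulmx_sumr linear_sum mulmx_sumr form_sumr form_suml; apply: eq_bigr => a _.
rewrite -scalemxAr linearZ /= -scalemxAr rmorphXn /= horner_mx_X formZl formZr.
have le_ad : (a <= d)%N by rewrite -ltnS.
have -> : X ^+ d = X ^+ (d - a) *m X ^+ a by rewrite mulmxE -exprD subnK.
by rewrite mulmxA form_mulmx_exp.
Qed.

Lemma form_pstar_ker p v w :
  w *m horner_mx X p = 0 -> gamma (v *m horner_mx X (pstar q p)) w = 0.
Proof.
move=> wp0; rewrite (pstarE fbarD) horner_mxZ -scalemxAr formZl.
by rewrite -form_adjoint_conj_rev ?leqSpred // wp0 form0r mulr0.
Qed.

End IsometryAdjoint.

Theorem lemma6p1p4 (q u : nat) (F : finFieldType) (n : nat)
  (hu : u = 1%N \/ u = 2%N) (hF : #|F| = (q ^ u)%N)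
  (beta : 'rV[F]_n.+1 -> 'rV[F]_n.+1 -> F)
  (hbeta : is_form q u beta) (hnd : nondeg_form beta)
  (X : 'M[F]_n.+1) (hX : in_isom_group beta X)
  (h : nat) (f : 'I_h -> {poly F}) (e : 'I_h -> nat)
  (hfPhi : forall i, inPhi q (f i)) (hfinj : injective f)
  (he : forall i, (0 < e i)%N)
  (hmin : mxminpoly X = \prod_(i < h) f i ^+ e i)
  (g : 'M[F]_n.+1) (hg : g \in unitmx)
  (gamma : 'rV[F]_n.+1 -> 'rV[F]_n.+1 -> F)
  (hgamma : forall v w, gamma v w = beta (v *m g) (w *m g))
  (hgX : forall v w, gamma (v *m X) (w *m X) = gamma v w)
  (i j : 'I_h) (hij : f i <> pstar q (f j)) :
  forall v w : 'rV[F]_n.+1,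
    v *m horner_mx X (f i ^+ e i) = 0 ->
    w *m horner_mx X (f j ^+ e j) = 0 ->
    gamma v w = 0.
Proof.
move=> v w v_ker w_ker.
have u_gt0 : (0 < u)%N by case: hu => ->.
have barD := fbarD_of_card u_gt0 hF; have barK := fbarK_of_card hu hF.
have gamma_sesqui := sesqui_form_mulmx hgamma hbeta.1.
have [_ fj0 selfdual_fj] := inPhi_selfdual barD barK (hfPhi j).
have neq_fij : f i <> f j by rewrite -selfdual_fj.
have coprime_ij : coprimep (f i ^+ e i) (f j ^+ e j).
  exact/coprimep_expl/coprimep_expr/(inPhi_coprime barD barK (hfPhi i) (hfPhi j)).
have selfdual_fje : pstar q (f j ^+ e j) = f j ^+ e j by rewrite pstarX ?selfdual_fj.
have [v' ->] := coprimep_ker_horner_mx coprime_ij v_ker.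
by rewrite -selfdual_fje (form_pstar_ker barD gamma_sesqui hgX).
Qed.
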